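(* Let $v \in \mathbb{R}^n$ be a zero-mean subgaussian random variable with variance proxy $R \succeq 0$. Then for any symmetric positive definite matrix $H \in \mathbb{R}^{n\times n}$ and any vector $x \in \mathbb{R}^n$, $$\frac{1}{\sqrt{|H+R|}}\, \mathbb{E}\left[e^{\frac12 \|x+v\|^2_{(H+R)^{-1}}}\right] \le \frac{1}{\sqrt{|H|}}\, e^{\frac12 \|x\|^2_{H^{-1}}}.$$
   Context: A zero-mean random variable $w \in \mathbb{R}^n$ is subgaussian with variance proxy $Q \succeq 0$ (a symmetric positive semidefinite matrix) if $\mathbb{E}[e^{\nu^\top w}] \le e^{\frac12 \nu^\top Q \nu}$ for all $\nu \in \mathbb{R}^n$. For a symmetric positive definite $A$, $\|x\|_A^2 = x^\top A x$; $|A|$ denotes the determinant. *)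

From HB Require Import structures.
From mathcomp Require Import all_boot all_order all_algebra.
From mathcomp Require Import all_classical all_reals all_analysis.
Set Implicit Arguments. Unset Strict Implicit. Unset Printing Implicit Defensive.
Import Order.TTheory GRing.Theory Num.Theory.
Local Open Scope ring_scope.
Local Open Scope classical_set_scope.

Definition qform (R : realType) (n : nat) (A : 'M[R]_n) (x : 'cV[R]_n) : R :=
  (x^T *m A *m x) ord0 ord0.

Definition sym_psd (R : realType) (n : nat) (A : 'M[R]_n) : Prop :=
  A^T = A /\ forall y : 'cV[R]_n, 0 <= qform A y.

Definition sym_pd (R : realType) (n : nat) (A : 'M[R]_n) : Prop :=
  A^T = A /\ forall y : 'cV[R]_n, y != 0 -> 0 < qform A y.

Definition dotv (R : realType) (n : nat) (a b : 'cV[R]_n) : R :=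
  (a^T *m b) ord0 ord0.

Definition subgaussian (R : realType) (d : measure_display) (T : measurableType d)
  (P : probability T R) (n : nat) (v : T -> 'cV[R]_n) (Q : 'M[R]_n) : Prop :=
  (forall i : 'I_n, measurable_fun setT (fun w => v w i ord0)) /\
  (forall i : 'I_n, P.-integrable setT (fun w => (v w i ord0)%:E)) /\
  (forall i : 'I_n, (\int[P]_w (v w i ord0)%:E = 0)%E) /\
  (forall nu : 'cV[R]_n,
     (\int[P]_w (expR (dotv nu (v w)))%:E <= (expR (2^-1 * qform Q nu))%:E)%E).

From HB Require Import structures.
From mathcomp Require Import all_boot all_order all_algebra.
From mathcomp Require Import all_classical all_reals all_analysis.
From mathcomp Require Import measurable_realfun polyrcf ring lra.
Set Implicit Arguments. Unset Strict Implicit. Unset Printing Implicit Defensive.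
Import Order.TTheory GRing.Theory Num.Theory.
Local Open Scope ring_scope.

(* Write y = x + v and S = H + R.  The Gaussian identity
   exp(t^2/2) = E[exp(t g)], g ~ N(0,1), trades a rank-one term (a^T y)^2 of
   a quadratic exponent for a linear one, to which the subgaussian bound
   applies after Fubini; what is left is an explicit Gaussian integral in g.
   Peeling S^-1 into rank-one pivots a a^T, this gives by induction, for every
   A = a_1 a_1^T + ... + a_k a_k^T below S^-1,
     E[exp(nu^T y + y^T A y / 2)] <= K_A exp(nu^T m_A + nu^T C_A nu / 2)
   with M_A = 1 - R A, m_A = M_A^-1 x, C_A = M_A^-1 R and
   K_A = det(M_A)^-1/2 exp(x^T A m_A / 2).  The Gaussian integral of a step
   is finite because a^T C_A a < 1, which is where A + a a^T <= S^-1 is used.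
   At A = S^-1 we have M_A = H S^-1, and nu = 0 gives the theorem. *)

Lemma quadratic_ge0_discr (R : realFieldType) (p q r : R) : 0 <= r ->
  (forall t, 0 <= p + 2 * t * q + t ^+ 2 * r) -> q ^+ 2 <= p * r.
Proof.
move=> r_ge0 ge0; have [r0|r_neq0] := eqVneq r 0.
  have [->|q_neq0] := eqVneq q 0; first by rewrite r0 expr0n mulr0.
  have := ge0 (- (p + 1) / (2 * q)); rewrite r0 mulr0 addr0.
  have -> : 2 * (- (p + 1) / (2 * q)) * q = - (p + 1) by field.
  lra.
have r_gt0 : 0 < r by rewrite lt_def r_neq0.
have := ge0 (- q / r).
have -> : p + 2 * (- q / r) * q + (- q / r) ^+ 2 * r = (p * r - q ^+ 2) / r by field.
by rewrite pmulr_lge0 ?invr_gt0 // subr_ge0.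
Qed.

Section QuadraticForm.
Variables (R : realType) (n : nat).
Implicit Types (a b c u x y : 'cV[R]_n) (A B : 'M[R]_n).

Lemma dotvE a b : dotv a b = \sum_i a i ord0 * b i ord0.
Proof. by rewrite /dotv mxE; apply: eq_bigr => i _; rewrite mxE. Qed.

Lemma dotvC a b : dotv a b = dotv b a.
Proof. by rewrite !dotvE; apply: eq_bigr => i _; rewrite mulrC. Qed.

Lemma dotvDl a b c : dotv (a + b) c = dotv a c + dotv b c.
Proof. by rewrite !dotvE -big_split; apply: eq_bigr => i _; rewrite mxE mulrDl. Qed.

Lemma dotvDr a b c : dotv a (b + c) = dotv a b + dotv a c.
Proof. by rewrite dotvC dotvDl !(dotvC a). Qed.

Lemma dotvZl k a b : dotv (k *: a) b = k * dotv a b.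
Proof. by rewrite !dotvE mulr_sumr; apply: eq_bigr => i _; rewrite mxE mulrA. Qed.

Lemma dotvZr k a b : dotv a (k *: b) = k * dotv a b.
Proof. by rewrite dotvC dotvZl dotvC. Qed.

Lemma dotvNr a b : dotv a (- b) = - dotv a b.
Proof. by rewrite -scaleN1r dotvZr mulN1r. Qed.

Lemma dotvBr a b c : dotv a (b - c) = dotv a b - dotv a c.
Proof. by rewrite dotvDr dotvNr. Qed.

Lemma dotv0l b : dotv 0 b = 0.
Proof. by rewrite -(scale0r 0) dotvZl mul0r. Qed.

Lemma dotv0r a : dotv a 0 = 0.
Proof. by rewrite dotvC dotv0l. Qed.

Lemma dotv_mulmxr a A b : dotv a (A *m b) = dotv (A^T *m a) b.
Proof. by rewrite /dotv trmx_mul trmxK mulmxA. Qed.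

Lemma dotv_rank1 a b c d : dotv a ((b *m c^T) *m d) = dotv a b * dotv c d.
Proof. by rewrite -mulmxA [c^T *m d]mx11_scalar mul_mx_scalar dotvZr mulrC. Qed.

Lemma dotvv_ge0 a : 0 <= dotv a a.
Proof. by rewrite dotvE sumr_ge0 // => i _; rewrite -expr2 sqr_ge0. Qed.

Lemma dotv_delta_mxl i b : dotv (delta_mx i ord0) b = b i ord0.
Proof. by rewrite /dotv trmx_delta -rowE mxE. Qed.

Lemma qformE A x : qform A x = dotv x (A *m x).
Proof. by rewrite /qform /dotv mulmxA. Qed.

Lemma qformDl A B x : qform (A + B) x = qform A x + qform B x.
Proof. by rewrite !qformE mulmxDl dotvDr. Qed.

Lemma qformNl A x : qform (- A) x = - qform A x.
Proof. by rewrite !qformE mulNmx -scaleN1r dotvZr mulN1r. Qed.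

Lemma qformZl k A x : qform (k *: A) x = k * qform A x.
Proof. by rewrite !qformE -scalemxAl dotvZr. Qed.

Lemma qform0l x : qform 0 x = 0.
Proof. by rewrite qformE mul0mx dotv0r. Qed.

Lemma qformZr A k x : qform A (k *: x) = k ^+ 2 * qform A x.
Proof. by rewrite !qformE -scalemxAr dotvZl dotvZr mulrA. Qed.

Lemma qform0r A : qform A 0 = 0.
Proof. by rewrite qformE dotv0l. Qed.

Lemma qform_rank1 a x : qform (a *m a^T) x = dotv a x ^+ 2.
Proof. by rewrite qformE dotv_rank1 dotvC. Qed.

Lemma qform_delta_mx A i : qform A (delta_mx i ord0) = A i i.
Proof. by rewrite qformE dotv_delta_mxl -colE !mxE. Qed.

Lemma qformDr A x y : A^T = A ->
  qform A (x + y) = qform A x + 2 * dotv x (A *m y) + qform A y.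
Proof.
move=> symA; rewrite !qformE mulmxDr !dotvDl !dotvDr.
have -> : dotv y (A *m x) = dotv x (A *m y) by rewrite dotv_mulmxr symA dotvC.
ring.
Qed.

Lemma sym_psd_cauchy_schwarz A u y : sym_psd A ->
  dotv u (A *m y) ^+ 2 <= qform A u * qform A y.
Proof.
move=> [symA psdA]; apply: quadratic_ge0_discr => // t.
by have := psdA (u + t *: y); rewrite qformDr // qformZr -scalemxAr dotvZr mulrA.
Qed.

Lemma sym_psd_diag_ge0 A i : sym_psd A -> 0 <= A i i.
Proof. by move=> [_ psdA]; rewrite -qform_delta_mx. Qed.

Lemma sym_psd_diag_eq0 A i j : sym_psd A -> A i i = 0 -> A i j = 0.
Proof.
move=> psdA Aii0; have := sym_psd_cauchy_schwarz (delta_mx i ord0) (delta_mx j ord0) psdA.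
rewrite dotv_delta_mxl -colE !qform_delta_mx Aii0 mul0r !mxE.
by move=> le0; apply/eqP; rewrite -sqrf_eq0 eq_le le0 sqr_ge0.
Qed.

End QuadraticForm.

Section RankOneDecomposition.
Variables (R : realType) (n : nat).

Let supp (A : 'M[R]_n) := [set i | A i i != 0].

Section Pivot.
Variables (A : 'M[R]_n) (i : 'I_n).
Hypotheses (psdA : sym_psd A) (Aii_gt0 : 0 < A i i).
(* Subtracting a a^T clears row and column i of A. *)
Let a := (Num.sqrt (A i i))^-1 *: col i A.

Lemma pivot_sym_psd : sym_psd (A - a *m a^T).
Proof.
split; first by rewrite linearB /= trmx_mul trmxK psdA.1.
move=> y; rewrite qformDl qformNl qform_rank1 subr_ge0 dotvZl colE dotvC dotv_mulmxr psdA.1.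
rewrite exprMn exprVn (sqr_sqrtr (ltW Aii_gt0)) mulrC ler_pdivrMr // mulrC.
by rewrite -qform_delta_mx dotvC; apply: sym_psd_cauchy_schwarz.
Qed.

Lemma pivot_supp : supp (A - a *m a^T) \proper supp A.
Proof.
have aE j : a j ord0 = (Num.sqrt (A i i))^-1 * A j i by rewrite /a !mxE.
have aaE j k : (A - a *m a^T) j k = A j k - a j ord0 * a k ord0.
  by rewrite !mxE big_ord1 !mxE.
apply/properP; split.
  apply/fintype.subsetP => j; rewrite !inE; apply: contra => /eqP Ajj.
  by rewrite aaE !aE (@sym_psd_diag_eq0 _ _ A j i psdA Ajj) Ajj !mulr0 subr0.
exists i; first by rewrite inE gt_eqF.
rewrite inE negbK aaE aE mulrACA -expr2 exprVn.
by rewrite (sqr_sqrtr (ltW Aii_gt0)) mulKf ?subrr // gt_eqF.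
Qed.

End Pivot.

Lemma sym_psd_rank1_ind (P : 'M[R]_n -> Prop) : P 0 ->
    (forall A (a : 'cV_n), P A -> P (A + a *m a^T)) ->
  forall A, sym_psd A -> P A.
Proof.
move=> P0 Pstep A; have [k le_supp] := ubnP #|supp A|.
elim: k A le_supp => // k IHk A le_supp psdA.
have [supp0|[i]] := set_0Vmem (supp A).
  suff -> : A = 0 by [].
  apply/matrixP => j l; rewrite mxE; apply: (@sym_psd_diag_eq0 _ _ A j l psdA).
  by apply/eqP; move/setP: supp0 => /(_ j); rewrite !inE => /negbFE.
rewrite inE => Aii_neq0.
have Aii_gt0 : 0 < A i i by rewrite lt_def Aii_neq0 sym_psd_diag_ge0.
set a := (Num.sqrt (A i i))^-1 *: col i A.
rewrite -(subrK (a *m a^T) A); apply/Pstep/IHk; last exact: pivot_sym_psd.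
by rewrite -ltnS (leq_trans _ le_supp) // ltnS proper_card // pivot_supp.
Qed.

End RankOneDecomposition.

Section PositiveDefinite.
Variables (R : realType) (n : nat).
Implicit Types (A H Q S : 'M[R]_n).

Lemma sym_pd_psd A : sym_pd A -> sym_psd A.
Proof.
move=> [symA pdA]; split => // y; have [->|y_neq0] := eqVneq y 0.
  by rewrite qform0r.
exact/ltW/pdA.
Qed.

Lemma sym_pd_addr H A : sym_pd H -> sym_psd A -> sym_pd (H + A).
Proof.
move=> [symH pdH] [symA psdA]; split; first by rewrite linearD /= symH symA.
by move=> y y_neq0; rewrite qformDl ltr_wpDr ?psdA ?pdH.
Qed.

Lemma sym_pd_unitmx A : sym_pd A -> A \in unitmx.
Proof.
move=> [_ pdA]; rewrite unitmxE unitfE; apply/negP => /det0P[v v_neq0 vA0].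
by have := pdA v^T; rewrite trmx_eq0 /qform trmxK vA0 mul0mx mxE ltxx => /(_ v_neq0).
Qed.

Lemma sym_psd_invmx S : sym_pd S -> sym_psd (invmx S).
Proof.
move=> pdS; have unitS := sym_pd_unitmx pdS; split; first by rewrite trmx_inv pdS.1.
move=> u; rewrite -[u in qform _ u](mulKVmx unitS) qformE mulKmx //.
by rewrite dotvC -qformE; apply: (sym_pd_psd pdS).2.
Qed.

Lemma sym_pd_det_gt0 Q : sym_pd Q -> 0 < \det Q.
Proof.
(* - Q has no eigenvalue s >= 0, so the monic char_poly (- Q) stays positive on
   [0, +oo[; its value at 0 is \det Q. *)
move=> [symQ pdQ]; set p := char_poly (- Q).
have noroot_p : {in `[0, +oo[, forall s, ~~ root p s}.
  move=> s; rewrite in_itv andbT => s_ge0; rewrite -eigenvalue_root_char.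
  apply/eigenvalueP => -[v vQ v_neq0].
  have {}vQ : v *m Q = - s *: v by rewrite scaleNr -vQ mulmxN opprK.
  have := pdQ v^T; rewrite trmx_eq0 => /(_ v_neq0).
  rewrite /qform trmxK vQ -scalemxAl mxE -[v in v *m _]trmxK -/(dotv _ _).
  by rewrite mulNr oppr_gt0 ltNge mulr_ge0 // dotvv_ge0.
have /(_ 0) := sgp_pinftyP noroot_p; rewrite in_itv /= lexx => /(_ isT).
rewrite /sgp_pinfty (monicP (char_poly_monic _)) sgr1 horner_coef0 char_poly_det.
by rewrite -[- Q]scaleN1r detZ mulrA -exprMn mulN1r opprK expr1n mul1r => /eqP; rewrite sgr_cp0.
Qed.

End PositiveDefinite.

Lemma det_add1_rank1 (R : comNzRingType) (n : nat) (p : 'cV[R]_n) (q : 'rV[R]_n) :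
  \det (1%:M + p *m q) = 1 + (q *m p) ord0 ord0.
Proof.
pose B := block_mx (1%:M : 'M[R]_n) (- p) q (1%:M : 'M[R]_1).
have B_lu : B = block_mx 1%:M 0 q 1%:M *m block_mx 1%:M (- p) 0 (1%:M + q *m p).
  rewrite mulmx_block !(mul1mx, mulmx1, mul0mx, mulmx0, addr0, add0r).
  by rewrite mulmxN addrCA addNr addr0.
have B_ul : B = block_mx (1%:M + p *m q) (- p) 0 1%:M *m block_mx 1%:M 0 q 1%:M.
  rewrite mulmx_block !(mul1mx, mulmx1, mul0mx, mulmx0, addr0, add0r).
  by rewrite mulNmx addrK.
have := congr1 determinant B_ul; rewrite {1}B_lu !det_mulmx.
rewrite !det_ublock !det_lblock !det1 !mul1r !mulr1.
by rewrite det_mx11 !mxE eqxx /= => <-.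
Qed.

Section RankOneUpdate.
Variables (R : realType) (n : nat).
Implicit Types (z : 'cV[R]_n) (M : 'M[R]_n).

Lemma det_subr_rank1 M (w a : 'cV[R]_n) : M \in unitmx ->
  \det (M - w *m a^T) = \det M * (1 - dotv a (invmx M *m w)).
Proof.
move=> unitM; have -> : M - w *m a^T = M *m (1%:M + (- (invmx M *m w)) *m a^T).
  by rewrite mulmxDr mulmx1 mulNmx mulmxN !mulmxA mulmxV // mul1mx.
by rewrite det_mulmx det_add1_rank1 mulmxN mxE.
Qed.

Lemma qform_invmx_addr_lt (H Rv : 'M[R]_n) z : sym_pd H -> sym_psd Rv ->
  Rv *m z != 0 -> qform (invmx (H + Rv)) (Rv *m z) < qform Rv z.
Proof.
move=> pdH psdRv Rz_neq0; have unitS := sym_pd_unitmx (sym_pd_addr pdH psdRv).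
set w := invmx (H + Rv) *m (Rv *m z).
have Sw : (H + Rv) *m w = Rv *m z by rewrite mulKVmx.
have w_neq0 : w != 0 by apply: contraNneq Rz_neq0 => w0; rewrite -Sw w0 mulmx0.
have qSw : qform (invmx (H + Rv)) (Rv *m z) = qform (H + Rv) w.
  by rewrite !qformE -/w -Sw dotvC.
have zRw : dotv z (Rv *m w) = qform (H + Rv) w.
  by rewrite dotv_mulmxr psdRv.1 -Sw qformE dotvC.
have := psdRv.2 (z - w); rewrite qformDr ?psdRv.1 // -scaleN1r qformZr.
rewrite -scalemxAr dotvZr zRw qSw qformDl.
have := pdH.2 w w_neq0; lra.
Qed.

End RankOneUpdate.

Section TiltedParams.
Variables (R : realType) (n : nat).
Implicit Types (a m x : 'cV[R]_n) (A C Rv : 'M[R]_n).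

Definition rank1_denom C a := 1 - dotv a (C *m a).

(* Sherman-Morrison: the parameters for A + a a^T in terms of those for A. *)
Definition update_mean m C a := m + (dotv a m / rank1_denom C a) *: (C *m a).

Definition update_cov C a := C + (rank1_denom C a)^-1 *: ((C *m a) *m (C *m a)^T).

(* m = (1 - Rv A)^-1 x and C = (1 - Rv A)^-1 Rv, stated without inverses. *)
Definition tilted_params Rv x A m C :=
  [/\ A^T = A, C^T = C, (1%:M - Rv *m A) *m C = Rv,
      (1%:M - Rv *m A) *m m = x & 0 < \det (1%:M - Rv *m A)].

Definition mgf_exponent m C (nu : 'cV[R]_n) := dotv nu m + 2^-1 * qform C nu.

Definition tilt_const Rv x A m :=
  (Num.sqrt (\det (1%:M - Rv *m A)))^-1 * expR (2^-1 * dotv x (A *m m)).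

Lemma mgf_exponent_shift m C a nu (g : R) : C^T = C ->
  mgf_exponent m C (nu + g *: a) = mgf_exponent m C nu +
    g * (dotv a m + dotv (C *m a) nu) + 2^-1 * dotv a (C *m a) * g ^+ 2.
Proof.
move=> symC; rewrite /mgf_exponent dotvDl dotvZl qformDr // qformZr -scalemxAr.
by rewrite dotvZr (dotvC nu (C *m a)) [qform C a]qformE; field.
Qed.

Lemma mgf_exponent_update m C a nu : rank1_denom C a != 0 ->
  mgf_exponent m C nu + 2^-1 * ((dotv a m + dotv (C *m a) nu) ^+ 2 / rank1_denom C a) =
  2^-1 * (dotv a m ^+ 2 / rank1_denom C a) +
    mgf_exponent (update_mean m C a) (update_cov C a) nu.
Proof.
move=> gam_neq0; rewrite /mgf_exponent /update_mean /update_cov dotvDr dotvZr.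
by rewrite qformDl qformZl qform_rank1 (dotvC nu (C *m a)); field.
Qed.

Lemma tilted_params0 Rv x : Rv^T = Rv -> tilted_params Rv x 0 x Rv.
Proof. by move=> symRv; split; rewrite ?trmx0 // mulmx0 subr0 ?mul1mx // det1 ltr01. Qed.

Section Step.
Variables (Rv : 'M[R]_n) (x : 'cV[R]_n) (A : 'M[R]_n) (m : 'cV[R]_n) (C : 'M[R]_n).
Variable a : 'cV[R]_n.
Hypothesis symRv : Rv^T = Rv.
Hypothesis params : tilted_params Rv x A m C.
Let M := 1%:M - Rv *m A.
Let c := C *m a.
Let gam := rank1_denom C a.

Lemma tilted_params_Mc : M *m c = Rv *m a.
Proof. by case: params => _ _ MC _ _; rewrite /c mulmxA MC. Qed.

Lemma sub1_mulmx_rank1 : 1%:M - Rv *m (A + a *m a^T) = M - (Rv *m a) *m a^T.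
Proof. by rewrite mulmxDr mulmxA opprD addrA. Qed.

Lemma det_tilted_update : \det (1%:M - Rv *m (A + a *m a^T)) = \det M * gam.
Proof.
case: params => _ _ _ _ detM_gt0.
rewrite sub1_mulmx_rank1 det_subr_rank1 ?unitmxE ?unitfE ?gt_eqF //.
by rewrite -tilted_params_Mc mulKmx ?unitmxE ?unitfE ?gt_eqF.
Qed.

Lemma tilted_params_CAx : C *m A *m x = m - x.
Proof.
case: params => symA symC MC Mm _.
have MT : M^T = 1%:M - A *m Rv by rewrite /M linearB /= trmx1 trmx_mul symA symRv.
have AM : A *m M = M^T *m A by rewrite MT /M mulmxBr mulmxBl mulmx1 mul1mx mulmxA.
have CMT : C *m M^T = Rv by rewrite -symC -trmx_mul MC symRv.
rewrite -{1}Mm mulmxA -(mulmxA C) AM mulmxA CMT -Mm mulmxBl mul1mx.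
by rewrite opprB addrC subrK.
Qed.

Lemma rank1_denom_gt0 (H : 'M[R]_n) : sym_pd H -> sym_psd Rv ->
    (forall u, qform (A + a *m a^T) u <= qform (invmx (H + Rv)) u) ->
  0 < gam.
Proof.
(* c = Rv (a + A c), so A + a a^T <= (H + Rv)^-1 tested at c gives
   (a^T c)^2 < a^T c. *)
move=> pdH psdRv le_Si.
have c_eq : c = Rv *m (a + A *m c).
  by rewrite mulmxDr -tilted_params_Mc mulmxBl mul1mx mulmxA subrK.
have [c0|c_neq0] := eqVneq c 0.
  by rewrite /gam /rank1_denom -/c c0 dotv0r subr0 ltr01.
have := qform_invmx_addr_lt pdH psdRv (z := a + A *m c); rewrite -c_eq => /(_ c_neq0).
have -> : qform Rv (a + A *m c) = dotv a c + qform A c.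
  by rewrite qformE -c_eq dotvDl qformE (dotvC (A *m c)).
have := le_Si c; rewrite qformDl qform_rank1 /gam /rank1_denom -/c.
nra.
Qed.

Hypothesis gam_gt0 : 0 < gam.

Lemma dotv_update_mean : dotv x ((A + a *m a^T) *m update_mean m C a) =
  dotv x (A *m m) + dotv a m ^+ 2 / gam.
Proof.
case: params => symA symC _ _ _.
have xAc : dotv x (A *m c) = dotv a m - dotv a x.
  rewrite dotv_mulmxr symA dotv_mulmxr symC mulmxA tilted_params_CAx dotvC.
  by rewrite dotvBr.
rewrite /update_mean mulmxDl !mulmxDr !dotvDr -!scalemxAr !dotvZr !dotv_rank1 -/c xAc.
rewrite (dotvC x a) -/gam /gam /rank1_denom; field.
by rewrite -/(rank1_denom C a) -/gam gt_eqF.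
Qed.

Lemma tilted_params_update :
  tilted_params Rv x (A + a *m a^T) (update_mean m C a) (update_cov C a).
Proof.
case: params => symA symC MC Mm detM_gt0.
have gam_neq0 : gam != 0 by rewrite gt_eqF.
have aTc : a^T *m c = (dotv a c)%:M by rewrite [LHS]mx11_scalar.
have aTC : a^T *m C = c^T by rewrite /c trmx_mul symC.
have aTm : a^T *m m = (dotv a m)%:M by rewrite [LHS]mx11_scalar.
split.
- by rewrite linearD /= symA trmx_mul trmxK.
- by rewrite linearD /= symC linearZ /= trmx_mul trmxK.
- rewrite sub1_mulmx_rank1 /update_cov mulmxDr (mulmxBl M _ C) (mulmxBl M _ (_ *: _)) MC.
  rewrite -!scalemxAr mulmxA tilted_params_Mc -[_ *m a^T *m C]mulmxA aTC.
  rewrite -[_ *m a^T *m (c *m c^T)]mulmxA [a^T *m _]mulmxA aTc mul_scalar_mx.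
  rewrite -scalemxAr scalerA -scalerBl.
  have -> : gam^-1 - gam^-1 * dotv a c = 1 by rewrite /gam /rank1_denom; field.
  by rewrite scale1r subrK.
- rewrite sub1_mulmx_rank1 /update_mean mulmxDr (mulmxBl M _ m) (mulmxBl M _ (_ *: _)) Mm.
  rewrite -!scalemxAr tilted_params_Mc -[_ *m a^T *m m]mulmxA aTm.
  rewrite -[_ *m a^T *m c]mulmxA aTc !mul_mx_scalar scalerA -scalerBl.
  have -> : dotv a m / gam - dotv a m / gam * dotv a c = dotv a m.
    by rewrite /gam /rank1_denom; field.
  by rewrite subrK.
- by rewrite det_tilted_update mulr_gt0.
Qed.

Lemma tilt_const_update : tilt_const Rv x (A + a *m a^T) (update_mean m C a) =
  tilt_const Rv x A m * (Num.sqrt gam)^-1 * expR (2^-1 * (dotv a m ^+ 2 / gam)).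
Proof.
rewrite /tilt_const det_tilted_update dotv_update_mean sqrtrM; last first.
  by case: params => _ _ _ _ /ltW.
by rewrite invfM mulrDr expRD; ring.
Qed.

End Step.

Lemma tilt_const_invmx (Rv H : 'M[R]_n) x m C : sym_pd H -> sym_psd Rv ->
    tilted_params Rv x (invmx (H + Rv)) m C ->
  tilt_const Rv x (invmx (H + Rv)) m =
    Num.sqrt (\det (H + Rv)) / Num.sqrt (\det H) * expR (2^-1 * qform (invmx H) x).
Proof.
move=> pdH psdRv [_ _ _ Mm _]; have pdS := sym_pd_addr pdH psdRv.
have M_eq : 1%:M - Rv *m invmx (H + Rv) = H *m invmx (H + Rv).
  by rewrite -(mulmxV (sym_pd_unitmx pdS)) mulmxDl addrK.
have Sim : invmx (H + Rv) *m m = invmx H *m x.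
  by rewrite -Mm M_eq -mulmxA mulKmx ?sym_pd_unitmx.
rewrite /tilt_const M_eq Sim -qformE det_mulmx det_inv sqrtrM ?ltW ?sym_pd_det_gt0 //.
by rewrite sqrtrV ?ltW ?sym_pd_det_gt0 // invfM invrK [_^-1 * _]mulrC.
Qed.

End TiltedParams.

Local Open Scope classical_set_scope.

Section GaussianSmoothing.
Variable R : realType.

Lemma integral_expR_quadratic_normal_pdf (al be : R) : al < 1 ->
  (\int[lebesgue_measure]_g (expR (be * g + 2^-1 * al * g ^+ 2) * normal_pdf 0 1 g)%:E
   = ((Num.sqrt (1 - al))^-1 * expR (2^-1 * (be ^+ 2 / (1 - al))))%:E)%E.
Proof.
move=> al_lt1; set gam := 1 - al; have gam_gt0 : 0 < gam by rewrite subr_gt0.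
set sig := Num.sqrt gam^-1.
have sig_neq0 : sig != 0 by rewrite gt_eqF // sqrtr_gt0 invr_gt0.
set k := (Num.sqrt gam)^-1 * expR (2^-1 * (be ^+ 2 / gam)).
have k_ge0 : 0 <= k by rewrite mulr_ge0 ?invr_ge0 ?sqrtr_ge0 ?expR_ge0.
(* completing the square: the integrand is k times the density of N(be/gam, 1/gam) *)
have integrandE g : expR (be * g + 2^-1 * al * g ^+ 2) * normal_pdf 0 1 g =
    k * normal_pdf (be / gam) sig g.
  rewrite /normal_pdf (negbTE sig_neq0) oner_eq0 /normal_peak /normal_fun.
  rewrite sqr_sqrtr ?invr_ge0 ?(ltW gam_gt0) // expr1n mul1r.
  rewrite -mulrnAr sqrtrM ?invr_ge0 ?(ltW gam_gt0) // sqrtrV ?(ltW gam_gt0) //.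
  rewrite invfM invrK /k mulrCA -expRD.
  transitivity ((Num.sqrt (pi *+ 2))^-1 *
      expR (2^-1 * (be ^+ 2 / gam) + - (g - be / gam) ^+ 2 / (gam^-1 *+ 2))).
    by congr (_ * expR _); rewrite /gam; field; rewrite -/gam gt_eqF.
  by rewrite expRD; field; rewrite !sqrtr_eq0 -!ltNge gam_gt0 andbT mulrn_wgt0 ?pi_gt0.
under eq_integral do rewrite integrandE EFinM.
rewrite ge0_integralZl //.
- by rewrite integral_normal_pdf mule1.
- by apply/measurable_EFinP; exact: measurable_normal_pdf.
- by move=> g _; rewrite lee_fin normal_pdf_ge0.
Qed.

Lemma expR_half_sqr_normal (b : R) : (expR (2^-1 * b ^+ 2))%:E =
  (\int[lebesgue_measure]_g (expR (g * b) * normal_pdf 0 1 g)%:E)%E.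
Proof.
have := @integral_expR_quadratic_normal_pdf 0 b ltr01.
rewrite subr0 sqrtr1 !invr1 mul1r mulr1 => <-.
by apply: eq_integral => g _; rewrite mulr0 mul0r addr0 (mulrC b).
Qed.

Section HubbardStratonovich.
Variables (d : measure_display) (T : measurableType d) (P : probability T R).
Variables (f1 f2 : T -> R).
Hypotheses (mf1 : measurable_fun setT f1) (mf2 : measurable_fun setT f2).

Let F (z : T * R) : \bar R := (expR (f1 z.1 + z.2 * f2 z.1) * normal_pdf 0 1 z.2)%:E.

Let measurable_F : measurable_fun setT F.
Proof.
apply/measurable_EFinP; apply: measurable_funM.
  apply: measurableT_comp; first exact: measurable_expR.
  apply: measurable_funD; first exact: measurableT_comp mf1 measurable_fst.
  apply: measurable_funM; first exact: measurable_snd.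
  exact: measurableT_comp mf2 measurable_fst.
exact: measurableT_comp (measurable_normal_pdf 0 1) measurable_snd.
Qed.

Let F_ge0 z : (0 <= F z)%E.
Proof. by rewrite lee_fin mulr_ge0 ?expR_ge0 ?normal_pdf_ge0. Qed.

Lemma hubbard_stratonovich :
  (\int[P]_w (expR (f1 w + 2^-1 * f2 w ^+ 2))%:E =
   \int[lebesgue_measure]_g \int[P]_w (expR (f1 w + g * f2 w) * normal_pdf 0 1 g)%:E)%E.
Proof.
transitivity (\int[P]_w \int[lebesgue_measure]_g F (w, g))%E.
  apply: eq_integral => w _; rewrite expRD EFinM expR_half_sqr_normal.
  rewrite -ge0_integralZl ?lee_fin ?expR_ge0 //; last first.
  - by move=> g _; rewrite lee_fin mulr_ge0 ?expR_ge0 ?normal_pdf_ge0.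
  - apply/measurable_EFinP; apply: measurable_funM; last exact: measurable_normal_pdf.
    by apply: measurableT_comp; [exact: measurable_expR | exact: mulrr_measurable].
  by apply: eq_integral => g _; rewrite -EFinM /F expRD mulrA.
exact: (fubini_tonelli (m1 := P) (m2 := lebesgue_measure) F measurable_F F_ge0).
Qed.

Lemma gaussian_smoothing_le (K phi0 b al : R) : 0 <= K -> al < 1 ->
    (forall g, \int[P]_w (expR (f1 w + g * f2 w))%:E
       <= (K * expR (phi0 + g * b + 2^-1 * al * g ^+ 2))%:E)%E ->
  (\int[P]_w (expR (f1 w + 2^-1 * f2 w ^+ 2))%:E
    <= (K * (Num.sqrt (1 - al))^-1 * expR (phi0 + 2^-1 * (b ^+ 2 / (1 - al))))%:E)%E.
Proof.
move=> K_ge0 al_lt1 le_K.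
have measurable_gauss : measurable_fun setT
    (fun g => (expR (b * g + 2^-1 * al * g ^+ 2) * normal_pdf 0 1 g)%:E).
  apply/measurable_EFinP; apply: measurable_funM; last exact: measurable_normal_pdf.
  apply: measurableT_comp; first exact: measurable_expR.
  apply: measurable_funD; first exact: measurable_funM.
  by apply: measurable_funM => //; exact: exprn_measurable.
rewrite hubbard_stratonovich; apply: (@le_trans _ _ (\int[lebesgue_measure]_g
   ((K * expR phi0)%:E * (expR (b * g + 2^-1 * al * g ^+ 2) * normal_pdf 0 1 g)%:E))%E).
  apply: ge0_le_integral => //.
  - by move=> g _; apply: integral_ge0 => w _; apply: F_ge0 (w, g).
  - exact: (measurable_fun_fubini_tonelli_G (m1 := P) F measurable_F F_ge0).
  - by apply: emeasurable_funM => //; exact: measurable_cst.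
  - move=> g _; under eq_integral do rewrite EFinM.
    rewrite ge0_integralZr ?lee_fin ?normal_pdf_ge0 //; last first.
      apply/measurable_EFinP; apply: measurableT_comp; first exact: measurable_expR.
      by apply: measurable_funD => //; exact: measurable_funM.
    have -> : ((K * expR phi0)%:E * (expR (b * g + 2^-1 * al * g ^+ 2) * normal_pdf 0 1 g)%:E
        = (K * expR (phi0 + g * b + 2^-1 * al * g ^+ 2))%:E * (normal_pdf 0 1 g)%:E)%E.
      by rewrite -!EFinM -addrA (expRD phi0) (mulrC g b); congr EFin; ring.
    by rewrite lee_wpmul2r ?lee_fin ?normal_pdf_ge0.
rewrite ge0_integralZl ?lee_fin ?mulr_ge0 ?expR_ge0 //; last first.
  by move=> g _; rewrite lee_fin mulr_ge0 ?expR_ge0 ?normal_pdf_ge0.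
by rewrite integral_expR_quadratic_normal_pdf // -EFinM expRD mulrACA mulrA.
Qed.

End HubbardStratonovich.

End GaussianSmoothing.

Section SubgaussianQuadraticMgf.
Variables (R : realType) (d : measure_display) (T : measurableType d).
Variables (P : probability T R) (n : nat) (v : T -> 'cV[R]_n) (Rv : 'M[R]_n).
Variable x : 'cV[R]_n.
Hypothesis psdRv : sym_psd Rv.
Hypothesis measurable_v : forall i, measurable_fun setT (fun w => v w i ord0).
Hypothesis mgf_v : forall nu,
  (\int[P]_w (expR (dotv nu (v w)))%:E <= (expR (2^-1 * qform Rv nu))%:E)%E.

Let y w := x + v w.

Let measurable_y i : measurable_fun setT (fun w => y w i ord0).
Proof. by under eq_fun do rewrite mxE; exact: measurable_funD. Qed.

Let measurable_dotv_y (c : 'cV[R]_n) : measurable_fun setT (fun w => dotv c (y w)).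
Proof.
under eq_fun do rewrite dotvE.
by apply: measurable_sum => i; apply: measurable_funM.
Qed.

Let measurable_qform_y (A : 'M[R]_n) : measurable_fun setT (fun w => qform A (y w)).
Proof.
under eq_fun do rewrite qformE dotvE.
apply: measurable_sum => i; apply: measurable_funM => //.
by under eq_fun do rewrite mxE; apply: measurable_sum => j; apply: measurable_funM.
Qed.

Definition tilted_mgf_bound (A : 'M[R]_n) m C := forall nu,
  (\int[P]_w (expR (dotv nu (y w) + 2^-1 * qform A (y w)))%:E
    <= (tilt_const Rv x A m * expR (mgf_exponent m C nu))%:E)%E.

Lemma tilted_mgf_bound0 : tilted_mgf_bound 0 x Rv.
Proof.
move=> nu; rewrite /tilt_const mulmx0 subr0 det1 sqrtr1 invr1 mul0mx dotv0r mulr0.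
rewrite expR0 !mul1r /mgf_exponent expRD EFinM.
under eq_integral do rewrite qform0l mulr0 addr0 dotvDr expRD EFinM.
rewrite ge0_integralZl ?lee_fin ?expR_ge0 // ?lee_wpmul2l ?lee_fin ?expR_ge0 //.
apply/measurable_EFinP; apply: measurableT_comp => //.
under eq_fun do rewrite dotvE.
by apply: measurable_sum => i; apply: measurable_funM.
Qed.

Lemma tilted_mgf_bound_update A m C a : tilted_params Rv x A m C ->
    0 < rank1_denom C a -> tilted_mgf_bound A m C ->
  tilted_mgf_bound (A + a *m a^T) (update_mean m C a) (update_cov C a).
Proof.
move=> params gam_gt0 bound nu.
have symC : C^T = C by case: params.
under eq_integral do rewrite qformDl qform_rank1 mulrDr addrA.
have measurable_f1 : measurable_fun setT
    (fun w => dotv nu (y w) + 2^-1 * qform A (y w)).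
  by apply: measurable_funD => //; apply: measurable_funM.
have := gaussian_smoothing_le (P := P) measurable_f1 (measurable_dotv_y a)
  (K := tilt_const Rv x A m) (phi0 := mgf_exponent m C nu)
  (b := dotv a m + dotv (C *m a) nu) (al := dotv a (C *m a)).
rewrite -/(rank1_denom C a) mgf_exponent_update ?gt_eqF // expRD mulrA.
rewrite -(tilt_const_update psdRv.1 params) //; apply.
- by rewrite mulr_ge0 ?invr_ge0 ?sqrtr_ge0 ?expR_ge0.
- by rewrite -subr_gt0.
move=> g; have integrandE w : dotv nu (y w) + 2^-1 * qform A (y w) + g * dotv a (y w) =
    dotv (nu + g *: a) (y w) + 2^-1 * qform A (y w) by rewrite dotvDl dotvZl addrAC.
under eq_integral do rewrite integrandE.
by apply: le_trans (bound _) _; rewrite mgf_exponent_shift.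
Qed.

Lemma tilted_mgf_bound_invmx (H : 'M[R]_n) : sym_pd H ->
  exists m C, tilted_params Rv x (invmx (H + Rv)) m C /\
              tilted_mgf_bound (invmx (H + Rv)) m C.
Proof.
move=> pdH; set Si := invmx (H + Rv).
suff : forall A, sym_psd A -> (forall u, qform A u <= qform Si u) ->
    exists m C, tilted_params Rv x A m C /\ tilted_mgf_bound A m C.
  by apply; first exact/sym_psd_invmx/sym_pd_addr.
apply: sym_psd_rank1_ind.
  by move=> _; exists x, Rv; split; [exact: tilted_params0 psdRv.1 | exact: tilted_mgf_bound0].
move=> A a IH le_Si.
have [|m [C [params bound]]] := IH.
  by move=> u; apply: le_trans (le_Si u); rewrite qformDl qform_rank1 lerDl sqr_ge0.
have gam_gt0 := rank1_denom_gt0 params pdH psdRv le_Si.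
exists (update_mean m C a), (update_cov C a); split.
  exact: tilted_params_update.
exact: tilted_mgf_bound_update.
Qed.

End SubgaussianQuadraticMgf.

Theorem lemma1 (R : realType) (d : measure_display) (T : measurableType d)
  (P : probability T R) (n : nat) (v : T -> 'cV[R]_n) (Rv : 'M[R]_n) :
  sym_psd Rv -> subgaussian P v Rv ->
  forall (H : 'M[R]_n) (x : 'cV[R]_n), sym_pd H ->
  ((Num.sqrt (\det (H + Rv)))^-1 %:E *
     \int[P]_w (expR (2^-1 * qform (invmx (H + Rv)) (x + v w)))%:E
   <= ((Num.sqrt (\det H))^-1 * expR (2^-1 * qform (invmx H) x))%:E)%E.
Proof.
move=> psdRv [measurable_v [_ [_ mgf_v]]] H x pdH.
have [m [C [params bound]]] := tilted_mgf_bound_invmx x psdRv measurable_v mgf_v pdH.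
have := bound 0; rewrite (tilt_const_invmx pdH psdRv params) /mgf_exponent.
rewrite dotv0l qform0r mulr0 addr0 expR0 mulr1.
under eq_integral do rewrite dotv0l add0r.
have sqrtS_gt0 : 0 < Num.sqrt (\det (H + Rv)).
  by rewrite sqrtr_gt0 sym_pd_det_gt0 //; exact: sym_pd_addr.
move=> /(lee_wpmul2l (x := ((Num.sqrt (\det (H + Rv)))^-1)%:E)) le_tilt.
apply: le_trans (le_tilt _) _; first by rewrite lee_fin invr_ge0 ltW.
by rewrite -EFinM !mulrA mulVf ?mul1r // gt_eqF.
Qed.
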